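(* Under the standing assumptions below, one of the following holds: either there exist a fixed $a'_1\in M'$ and a map $v_1:N\to N'$ such that $\phi\left(\left[\begin{smallmatrix} 1 & 0\\ n & 0\end{smallmatrix}\right]\right)=\left[\begin{smallmatrix} 1 & a'_1\\ v_1(n) & 0\end{smallmatrix}\right]$ for all $n\in N$; or there exist a fixed $b'_2\in N'$ and a map $u_2:N\to M'$ such that $\phi\left(\left[\begin{smallmatrix} 1 & 0\\ n & 0\end{smallmatrix}\right]\right)=\left[\begin{smallmatrix} 0 & u_2(n)\\ b'_2 & 1\end{smallmatrix}\right]$ for all $n\in N$.
   Context: All rings have an identity $1\neq 0$. Standing assumptions: $R,S,R',S'$ are rings whose only idempotents are $0$ and $1$; $M$ is an $R$-$S$-bimodule, $N$ an $S$-$R$-bimodule, $M'$ an $R'$-$S'$-bimodule, $N'$ an $S'$-$R'$-bimodule; $T=\left[\begin{smallmatrix} R & M\\ N & S\end{smallmatrix}\right]$ and $T'=\left[\begin{smallmatrix} R' & M'\\ N' & S'\end{smallmatrix}\right]$ are the Morita context rings with both Morita maps zero, i.e. the sets of formal matrices with entrywise addition and product $\left[\begin{smallmatrix} r & m\\ n & s\end{smallmatrix}\right]\left[\begin{smallmatrix} r' & m'\\ n' & s'\end{smallmatrix}\right]=\left[\begin{smallmatrix} rr' & rm'+ms'\\ nr'+sn' & ss'\end{smallmatrix}\right]$; and $\phi:T\to T'$ is a ring isomorphism. *)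

From HB Require Import structures.
From mathcomp Require Import all_boot all_order all_algebra.
Set Implicit Arguments. Unset Strict Implicit. Unset Printing Implicit Defensive.
Import GRing.Theory.
Local Open Scope ring_scope.

Record bimod (R S : nzRingType) := Bimod {
  bcar :> zmodType;
  lact : R -> bcar -> bcar;
  ract : bcar -> S -> bcar;
  lactDl : forall (r r' : R) (m : bcar), lact (r + r') m = lact r m + lact r' m;
  lactDr : forall (r : R) (m m' : bcar), lact r (m + m') = lact r m + lact r m';
  lactA  : forall (r r' : R) (m : bcar), lact (r * r') m = lact r (lact r' m);
  lact1  : forall m : bcar, lact 1 m = m;
  ractDl : forall (m m' : bcar) (s : S), ract (m + m') s = ract m s + ract m' s;
  ractDr : forall (m : bcar) (s s' : S), ract m (s + s') = ract m s + ract m s';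
  ractA  : forall (m : bcar) (s s' : S), ract m (s * s') = ract (ract m s) s';
  ract1  : forall m : bcar, ract m 1 = m;
  lractA : forall (r : R) (m : bcar) (s : S), ract (lact r m) s = lact r (ract m s)
}.

(* The Morita context ring [[R, M], [N, S]] with both Morita maps zero. *)
Record mctx (R S : nzRingType) (M : bimod R S) (N : bimod S R) := MC {
  e11 : R; e12 : M; e21 : N; e22 : S }.

Section MCtx.
Variables (R S : nzRingType) (M : bimod R S) (N : bimod S R).
Definition mc_add (x y : mctx M N) : mctx M N :=
  MC (e11 x + e11 y) (e12 x + e12 y) (e21 x + e21 y) (e22 x + e22 y).
Definition mc_mul (x y : mctx M N) : mctx M N :=
  MC (e11 x * e11 y)
     (lact (e11 x) (e12 y) + ract (e12 x) (e22 y))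
     (ract (e21 x) (e11 y) + lact (e22 x) (e21 y))
     (e22 x * e22 y).
Definition mc_one : mctx M N := MC 1 0 0 1.
End MCtx.

Definition mc_ring_iso (R S R' S' : nzRingType) (M : bimod R S) (N : bimod S R)
  (M' : bimod R' S') (N' : bimod S' R') (phi : mctx M N -> mctx M' N') : Prop :=
  [/\ bijective phi,
      forall x y, phi (mc_add x y) = mc_add (phi x) (phi y),
      forall x y, phi (mc_mul x y) = mc_mul (phi x) (phi y)
    & phi (mc_one M N) = mc_one M' N'].

Definition only_trivial_idempotents (R : nzRingType) : Prop :=
  forall e : R, e * e = e -> e = 0 \/ e = 1.

From HB Require Import structures.
From mathcomp Require Import all_boot all_order all_algebra.
Set Implicit Arguments. Unset Strict Implicit. Unset Printing Implicit Defensive.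
Import GRing.Theory.
Local Open Scope ring_scope.

(* In the Morita context ring T = [[R, M], [N, S]] (zero Morita
   maps) the elements x_n = [[1, 0], [n, 0]] are idempotents, different from
   0 and 1, and satisfy x_n * x_k = x_n.  A ring isomorphism phi : T -> T'
   transports all three properties.  When R' and S' have only trivial
   idempotents, the diagonal of an idempotent of T' is (1,0), (0,1), (0,0) or
   (1,1), and the last two cases force the element to be 0 or 1; hence each
   phi(x_n) has diagonal (1,0) ("first shape") or (0,1) ("second shape").
   Finally phi(x_n) = phi(x_n) * phi(x_0): right multiplication by an element
   of first (resp. second) shape forces first (resp. second) shape and copies
   the off-diagonal entry M' (resp. N') of phi(x_0).  So all phi(x_n) share
   the shape of phi(x_0), together with its M'- or N'-entry. *)

Lemma double_eq0 (V : zmodType) (a : V) : a = a + a -> a = 0.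
Proof. by move=> /eqP; rewrite -subr_eq subrr eq_sym => /eqP. Qed.

Section BimoduleZero.
Variables (R S : nzRingType) (M : bimod R S).

Lemma lact0r (m : M) : lact (0 : R) m = 0.
Proof. by apply: double_eq0; rewrite -lactDl addr0. Qed.

Lemma lactr0 (r : R) : lact r (0 : M) = 0.
Proof. by apply: double_eq0; rewrite -lactDr addr0. Qed.

Lemma ract0r (s : S) : ract (0 : M) s = 0.
Proof. by apply: double_eq0; rewrite -ractDl addr0. Qed.

Lemma ractr0 (m : M) : ract m (0 : S) = 0.
Proof. by apply: double_eq0; rewrite -ractDr addr0. Qed.

End BimoduleZero.

Section MoritaContext.
Variables (R S : nzRingType) (M : bimod R S) (N : bimod S R).

Definition mc_zero : mctx M N := MC 0 0 0 0.

Lemma mctx_eta (z : mctx M N) : z = MC (e11 z) (e12 z) (e21 z) (e22 z).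
Proof. by case: z. Qed.

Lemma mc_mul_col (n k : N) :
  mc_mul (MC 1 0 n 0) (MC 1 0 k 0) = MC 1 0 n 0 :> mctx M N.
Proof.
by rewrite /mc_mul /= mulr1 mulr0 lactr0 ract0r addr0 ract1 lact0r addr0.
Qed.

Hypotheses (hR : only_trivial_idempotents R) (hS : only_trivial_idempotents S).

(* An idempotent other than 0 and 1 has diagonal (1,0) or (0,1): diagonal
   (0,0) kills both off-diagonal entries, and diagonal (1,1) makes each of
   them equal to its own double. *)
Lemma mc_idempotent_shape (z : mctx M N) :
  mc_mul z z = z -> z <> mc_zero -> z <> mc_one M N ->
  (e11 z = 1 /\ e22 z = 0) \/ (e11 z = 0 /\ e22 z = 1).
Proof.
case: z => a b c d; rewrite /mc_mul /= => -[ea eb ec ed] nz0 nz1.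
have [a0|a1] := hR ea; have [d0|d1] := hS ed; subst a d.
- move: eb ec; rewrite !lact0r !ractr0 ?addr0 ?add0r => b0 c0.
  by subst b c; case: nz0.
- by right.
- by left.
- move: eb ec; rewrite !lact1 !ract1 => /esym/double_eq0 b0 /esym/double_eq0 c0.
  by subst b c; case: nz1.
Qed.

Lemma mc_absorb_first (z y : mctx M N) :
  (e11 z = 1 /\ e22 z = 0) \/ (e11 z = 0 /\ e22 z = 1) ->
  e11 y = 1 -> e22 y = 0 -> z = mc_mul z y ->
  z = MC 1 (e12 y) (e21 z) 0.
Proof.
move=> shape y11 y22 zy.
have z22 : e22 z = 0 by rewrite zy /= y22 mulr0.
case: shape => [[z11 _]|[_ z22']]; last by move: (oner_neq0 S); rewrite -z22' z22 eqxx.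
rewrite [LHS]mctx_eta z11 z22; congr MC.
by rewrite zy /= z11 y22 ractr0 addr0 lact1.
Qed.

Lemma mc_absorb_second (z y : mctx M N) :
  (e11 z = 1 /\ e22 z = 0) \/ (e11 z = 0 /\ e22 z = 1) ->
  e11 y = 0 -> e22 y = 1 -> z = mc_mul z y ->
  z = MC 0 (e12 z) (e21 y) 1.
Proof.
move=> shape y11 y22 zy.
have z11 : e11 z = 0 by rewrite zy /= y11 mulr0.
case: shape => [[z11' _]|[_ z22]]; first by move: (oner_neq0 R); rewrite -z11' z11 eqxx.
rewrite [LHS]mctx_eta z11 z22; congr MC.
by rewrite zy /= z22 y11 ractr0 add0r lact1.
Qed.

End MoritaContext.

Section RingIso.
Variables (R S R' S' : nzRingType) (M : bimod R S) (N : bimod S R).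
Variables (M' : bimod R' S') (N' : bimod S' R').
Variable phi : mctx M N -> mctx M' N'.
Hypothesis hphi : mc_ring_iso phi.

Lemma mc_iso_zero : phi (mc_zero M N) = mc_zero M' N'.
Proof.
case: hphi => _ hadd _ _; have := hadd (mc_zero M N) (mc_zero M N).
rewrite /mc_add /= !addr0; case: (phi _) => a b c d [].
by move=> /double_eq0 -> /double_eq0 -> /double_eq0 -> /double_eq0 ->.
Qed.

Lemma mc_iso_inj : injective phi.
Proof. by case: hphi => [[psi phiK _] _ _ _]; exact: can_inj phiK. Qed.

Lemma mc_iso_nontrivial_idempotent (z : mctx M N) :
  mc_mul z z = z -> z <> mc_zero M N -> z <> mc_one M N ->
  [/\ mc_mul (phi z) (phi z) = phi z, phi z <> mc_zero M' N'
    & phi z <> mc_one M' N'].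
Proof.
case: hphi => _ _ hmul hone zz nz0 nz1; split.
- by rewrite -hmul zz.
- by rewrite -mc_iso_zero => /mc_iso_inj.
- by rewrite -hone => /mc_iso_inj.
Qed.

End RingIso.

Theorem proposition4p4 (R S R' S' : nzRingType)
  (M : bimod R S) (N : bimod S R) (M' : bimod R' S') (N' : bimod S' R')
  (hR : only_trivial_idempotents R) (hS : only_trivial_idempotents S)
  (hR' : only_trivial_idempotents R') (hS' : only_trivial_idempotents S')
  (phi : mctx M N -> mctx M' N') (hphi : mc_ring_iso phi) :
  (exists (a1 : M') (v1 : N -> N'),
      forall n : N, phi (MC (1 : R) (0 : M) n (0 : S)) = MC (1 : R') a1 (v1 n) (0 : S'))
  \/
  (exists (b2 : N') (u2 : N -> M'),
      forall n : N, phi (MC (1 : R) (0 : M) n (0 : S)) = MC (0 : R') (u2 n) b2 (1 : S')).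
Proof.
pose y n := phi (MC (1 : R) (0 : M) n (0 : S)).
have shape n : (e11 (y n) = 1 /\ e22 (y n) = 0) \/ (e11 (y n) = 0 /\ e22 (y n) = 1).
  have [||yy y0 y1] := mc_iso_nontrivial_idempotent hphi (mc_mul_col M n n).
  - by case=> /eqP; rewrite oner_eq0.
  - by case=> _ /eqP; rewrite eq_sym oner_eq0.
  - exact: (@mc_idempotent_shape _ _ M' N' hR' hS' _ yy y0 y1).
have absorb n : y n = mc_mul (y n) (y 0).
  by case: hphi => _ _ hmul _; rewrite /y -hmul mc_mul_col.
case: (shape 0) => [[y11 y22]|[y11 y22]]; [left|right].
- exists (e12 (y 0)), (fun n => e21 (y n)) => n.
  exact: mc_absorb_first (shape n) y11 y22 (absorb n).
- exists (e21 (y 0)), (fun n => e12 (y n)) => n.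
  exact: mc_absorb_second (shape n) y11 y22 (absorb n).
Qed.
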